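(* Let $d\geq 0$ and $0<i\leq d+1$ be integers, and write $d+1=qi+r$ with integers $q\geq 0$, $1\leq r\leq i$. Let $\Delta\in\mathcal{C}(i,d)$. Then $f_j(\Delta)\geq f_j(S(i,d))$ for every $1\leq j\leq r$.
   Context: All simplicial complexes are finite abstract simplicial complexes; $f_j(\Delta)$ denotes the number of $j$-dimensional faces of $\Delta$. A set $F$ of vertices is a missing face of $\Delta$ if $F\notin\Delta$ but every proper subset of $F$ is in $\Delta$; its dimension is $|F|-1$. $\mathcal{C}(i,d)$ denotes the family of $d$-dimensional simplicial complexes $\Delta$ with $\tilde H_d(\Delta;\mathbb{Z})\neq 0$ (reduced homology) and with no missing faces of dimension $>i$. For integers $d\geq 0$, $i>0$ with $d+1=qi+r$ ($q\geq 0$, $1\leq r\leq i$), $S(i,d)$ is the simplicial join of $q$ copies of $\partial\sigma^i$ and one copy of $\partial\sigma^r$ on pairwise disjoint vertex sets, where $\partial\sigma^k$ is the boundary complex of the $k$-simplex. *)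

From HB Require Import structures.
From mathcomp Require Import all_boot all_order all_algebra.
Set Implicit Arguments. Unset Strict Implicit. Unset Printing Implicit Defensive.
Import Order.TTheory GRing.Theory Num.Theory.

Definition is_complex (T : finType) (D : {set {set T}}) : Prop :=
  set0 \in D /\ (forall F G : {set T}, F \in D -> G \subset F -> G \in D).

Definition has_dim (T : finType) (D : {set {set T}}) (d : nat) : Prop :=
  (exists2 F, F \in D & #|F| = d.+1) /\ (forall F, F \in D -> #|F| <= d.+1).

Definition fnum (T : finType) (D : {set {set T}}) (j : nat) : nat :=
  #|[set F in D | #|F| == j.+1]|.

Definition missing_face (T : finType) (D : {set {set T}}) (F : {set T}) : Prop :=
  F \notin D /\ (forall G : {set T}, G \proper F -> G \in D).

Definition no_missing_above (T : finType) (D : {set {set T}}) (i : nat) : Prop :=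
  forall F, missing_face D F -> (#|F| - 1 <= i)%N.

(* Simplicial chain complex with integer coefficients on vertex set 'I_n,
   oriented by the natural order of vertices.  The coefficient of the facet
   G = F \ {v} in the boundary of the oriented simplex F is (-1)^k where k is
   the number of vertices of F smaller than v. *)
Definition bsign (n : nat) (F : {set 'I_n}) (v : 'I_n) : int :=
  (-1) ^+ #|[set u in F | (u < v)%N]|.

(* the (reduced) boundary of a d-chain c (a function on the d-faces of D),
   evaluated at a set G with |G| = d (G = set0 when d = 0: augmentation) *)
Definition bdry (n : nat) (D : {set {set 'I_n}}) (d : nat)
    (c : {set 'I_n} -> int) (G : {set 'I_n}) : int :=
  \sum_(F in D | (#|F| == d.+1) && (G \subset F))
     \sum_(v in F :\: G) (bsign F v * c F)%R.

(* Reduced d-th homology with integer coefficients of a complex of dimension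
   d: since there are no (d+1)-faces, there are no d-boundaries, so
   \tilde H_d(D;Z) = ker (\partial_d : C_d -> C_{d-1}) (with C_{-1} = Z). *)
Definition top_red_homology_nonzero (n : nat) (D : {set {set 'I_n}}) (d : nat)
  : Prop :=
  exists c : {set 'I_n} -> int,
    (forall F, c F != 0%R -> (F \in D) && (#|F| == d.+1)) /\
    (exists F, c F != 0%R) /\
    (forall G : {set 'I_n}, #|G| = d -> bdry D d c G = 0%R).

Definition in_C (n : nat) (i d : nat) (D : {set {set 'I_n}}) : Prop :=
  is_complex D /\ has_dim D d /\ top_red_homology_nonzero D d /\
  no_missing_above D i.

Definition bd_simplex (T : finType) (A : {set T}) : {set {set T}} :=
  [set F : {set T} | F \proper A].

(* S(i,d): with d+1 = q i + r, q = d %/ i, r = d %% i + 1.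
   Vertex set 'I_N with N = q(i+1) + (r+1), split into blocks
   block b = {k | k %/ (i+1) = b}, b = 0..q: q blocks of size i+1
   and a last block (b = q) of size r+1.  S(i,d) is the join of the
   boundary complexes of the simplices on these blocks: a face is a set
   whose intersection with every block is a face of the block's boundary. *)
Definition S_q (i d : nat) : nat := d %/ i.
Definition S_r (i d : nat) : nat := (d %% i).+1.
Definition S_N (i d : nat) : nat := S_q i d * i.+1 + (S_r i d).+1.

Definition S_block (i d : nat) (b : nat) : {set 'I_(S_N i d)} :=
  [set k : 'I_(S_N i d) | (k %/ i.+1 == b)%N].

Definition S_complex (i d : nat) : {set {set 'I_(S_N i d)}} :=
  [set F : {set 'I_(S_N i d)} |
     [forall b : 'I_(S_q i d).+1,
        (F :&: S_block i d b) \in bd_simplex (S_block i d b)]].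

(* Write d = q i + s with 0 <= s < i (so r = s + 1) and let N = q(i+1) + s + 2
   be the number of vertices of S(i,d).  A nonzero top homology class of a
   complex D in C(i,d) is carried by a nonempty family G of d-faces in which
   every ridge of a member lies in a second member; together with the facts
   that D has dimension d and that its minimal nonfaces have at most i+1
   vertices, this is recorded as a [flag_cycle].  Links of faces of G are flag
   cycles of lower dimension, so both main estimates are proved by strong
   induction on d, simultaneously for all flag cycles:
   - the support U of G has at least N vertices ([vertex_bound]);
   - every set of at most s+1 vertices of U is a face of D, and all but at most
     1 + q[s+1 = i] sets of s+2 vertices of U are faces ([face_bounds_hold]).
   The top bound is a double count over vertex links when U has more than N
   vertices, and an analysis of the missing (s+2)-faces when U is tight.
   On the other side, S(i,d) has at most all (j+1)-sets of its N vertices as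
   j-faces, and in dimension r it misses its (r+1)-element blocks
   ([S_top_faces]); the theorem follows by comparing the two. *)

From HB Require Import structures.
From mathcomp Require Import all_boot all_order all_algebra zify.
Set Implicit Arguments. Unset Strict Implicit. Unset Printing Implicit Defensive.
Import GRing.Theory.

Section FinsetFacts.
Variable T : finType.
Implicit Types (A B F U V : {set T}).

Lemma card_disjU A B : [disjoint A & B] -> #|A :|: B| = #|A| + #|B|.
Proof. by move=> dAB; apply/eqP; rewrite (leq_card_setU A B).2. Qed.

Lemma disjoint_setD A B : [disjoint A :\: B & B].
Proof. by rewrite disjoints_subset; apply/subsetP=> x; rewrite !inE => /andP[]. Qed.

Lemma setDUK A B : B \subset A -> (A :\: B) :|: B = A.
Proof. by move=> BA; rewrite setUC -{2}(setID A B) (setIidPr BA). Qed.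

Lemma card_sub_setD U A V : A \subset U -> V \subset U :\: A -> #|A| + #|V| <= #|U|.
Proof.
move=> AU /subset_leq_card; rewrite (cardsDS AU); have := subset_leq_card AU; lia.
Qed.

Lemma exists_set_between A B k : A \subset B -> #|A| <= k <= #|B| ->
  exists F, [/\ A \subset F, F \subset B & #|F| = k].
Proof.
move=> AB /andP[Ak]; rewrite -(subnKC Ak).
elim: (k - #|A|) => [|m IH] kB; first by exists A; rewrite addn0.
have [|F [AF FB cF]] := IH; first lia.
have /subsetPn[x xB xF] : ~~ (B \subset F) by apply/negP=> /subset_leq_card; lia.
exists (x |: F); split; first exact: subset_trans AF (subsetUr _ _).
  by rewrite subUset sub1set xB.
by rewrite cardsU1 xF cF addnS.
Qed.

End FinsetFacts.

Definition vsupp (T : finType) (G : {set {set T}}) : {set T} := \bigcup_(s in G) s.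

Definition link (T : finType) (D : {set {set T}}) (A : {set T}) : {set {set T}} :=
  [set t : {set T} | [disjoint t & A] && (t :|: A \in D)].

Lemma in_link (T : finType) (D : {set {set T}}) (A t : {set T}) :
  (t \in link D A) = [disjoint t & A] && (t :|: A \in D).
Proof. by rewrite inE. Qed.

Lemma in_vsupp (T : finType) (G : {set {set T}}) (x : T) :
  reflect (exists2 s, s \in G & x \in s) (x \in vsupp G).
Proof. exact: bigcupP. Qed.

Lemma sub_vsupp (T : finType) (G : {set {set T}}) (s : {set T}) :
  s \in G -> s \subset vsupp G.
Proof. by move=> sG; apply/subsetP=> x xs; apply/in_vsupp; exists s. Qed.

(* The combinatorial shadow of a nonzero top-dimensional cycle: D is a
   simplicial complex of dimension at most d all of whose minimal nonfaces
   have at most i+1 vertices, and G (the support of the cycle) is a nonempty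
   family of d-faces of D in which every ridge of a member lies in a second
   member.  This is all the proof uses about the class C(i,d), and unlike
   C(i,d) it passes to links. *)
Record flag_cycle (T : finType) (i : nat) (D G : {set {set T}}) (d : nat) : Prop :=
  FlagCycle {
  fc_down : forall F H : {set T}, F \in D -> H \subset F -> H \in D;
  fc_dim : forall F : {set T}, F \in D -> #|F| <= d.+1;
  fc_small_nonface : forall F : {set T}, F \notin D ->
    exists M : {set T}, [/\ M \subset F, M \notin D & #|M| <= i.+1];
  fc_facetD : forall s : {set T}, s \in G -> s \in D;
  fc_facet_card : forall s : {set T}, s \in G -> #|s| = d.+1;
  fc_nonempty : exists s : {set T}, s \in G;
  fc_ridge : forall (s : {set T}) (x : T), s \in G -> x \in s ->
    exists s' : {set T}, [/\ s' \in G, s' != s & s :\ x \subset s']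
}.

Section Links.
Variables (T : finType) (i d d' : nat) (D G : {set {set T}}) (A s0 : {set T}).
Hypotheses (H : flag_cycle i D G d) (s0G : s0 \in G) (As0 : A \subset s0).
Hypothesis dim_link : #|A| + d' = d.

(* A nonface of the link contains a small one: a vertex of A, or the part
   outside A of a small nonface of D. *)
Lemma link_small_nonface (F : {set T}) : F \notin link D A ->
  exists M : {set T}, [/\ M \subset F, M \notin link D A & #|M| <= i.+1].
Proof.
rewrite in_link negb_and => /orP[|FA].
  rewrite -setI_eq0 => /set0Pn[x]; rewrite inE => /andP[xF xA].
  exists [set x]; rewrite sub1set xF cards1 in_link -setI_eq0; split=> //.
  by apply/nandP; left; apply/set0Pn; exists x; rewrite !inE eqxx.
have [M [MF MD cM]] := fc_small_nonface H FA.
exists (M :\: A); split.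
- apply/subsetP=> x; rewrite inE => /andP[xA /(subsetP MF)].
  by rewrite inE (negPf xA) orbF.
- rewrite in_link negb_and; apply/orP; right; apply: contra MD => MAD.
  apply: (fc_down H MAD); apply/subsetP=> x xM.
  by rewrite !inE xM andbT; case: (x \in A).
- exact: leq_trans (subset_leq_card (subsetDl _ _)) cM.
Qed.

Lemma link_ridge (t : {set T}) (x : T) : t \in link G A -> x \in t ->
  exists t' : {set T}, [/\ t' \in link G A, t' != t & t :\ x \subset t'].
Proof.
rewrite in_link => /andP[dtA tAG] xt.
have xA : x \notin A by rewrite (disjointFr dtA xt).
have xtA : x \in t :|: A by rewrite inE xt.
have [s' [s'G s'ne sub]] := fc_ridge H tAG xtA.
have As' : A \subset s'.
  apply: subset_trans sub; apply/subsetP=> y yA; rewrite !inE yA orbT andbT.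
  by apply: contraNneq xA => <-.
have s'K := setDUK As'.
exists (s' :\: A); split.
- by rewrite in_link s'K s'G disjoint_setD.
- apply: contra s'ne => /eqP e; apply/eqP; by rewrite -s'K e.
- apply/subsetP=> y; rewrite !inE => /andP[yx yt].
  rewrite (disjointFr dtA yt) /=; apply: (subsetP sub); by rewrite !inE yx yt.
Qed.

Lemma flag_cycle_link : flag_cycle i (link D A) (link G A) d'.
Proof.
have s0K := setDUK As0.
split.
- move=> F F'; rewrite !in_link => /andP[dFA FD] F'F.
  by rewrite (disjointWl F'F dFA) (fc_down H FD) // setSU.
- move=> F; rewrite in_link => /andP[dFA /(fc_dim H)].
  by rewrite card_disjU //; lia.
- exact: link_small_nonface.
- by move=> s; rewrite !in_link => /andP[-> /(fc_facetD H)].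
- move=> s; rewrite in_link => /andP[dsA /(fc_facet_card H)].
  by rewrite card_disjU //; lia.
- by exists (s0 :\: A); rewrite in_link s0K s0G disjoint_setD.
- exact: link_ridge.
Qed.

End Links.

Section FaceCounts.
Variable T : finType.
Implicit Types (D : {set {set T}}) (B U W : {set T}).

Definition face_count D W (k : nat) : nat :=
  #|[set F in D | (F \subset W) && (#|F| == k)]|.
Definition nonfaces D W (k : nat) : {set {set T}} :=
  [set B : {set T} | [&& B \subset W, #|B| == k & B \notin D]].

Lemma face_count_nonfaces D W k : face_count D W k + #|nonfaces D W k| = 'C(#|W|, k).
Proof.
rewrite /face_count /nonfaces -cards_draws.
rewrite -(cardsID D [set B : {set T} | B \subset W & #|B| == k]).
congr (_ + _); apply: eq_card => B; rewrite !inE.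
  by case: (B \in D); case: (B \subset W); case: (#|B| == k).
by case: (B \in D); case: (B \subset W); case: (#|B| == k).
Qed.

Lemma all_subsets_faces D W k : 'C(#|W|, k) <= face_count D W k ->
  forall B, B \subset W -> #|B| = k -> B \in D.
Proof.
rewrite -(face_count_nonfaces D W k) -[X in _ <= X]addn0 leq_add2l leqn0 cards_eq0.
move=> /eqP noB B BW cB; apply: contraT => BD.
by have := in_set0 B; rewrite -noB !inE BW cB eqxx BD.
Qed.

Lemma face_count_mono D W W' k : W \subset W' -> face_count D W k <= face_count D W' k.
Proof.
move=> WW'; apply: subset_leq_card; apply/subsetP=> F; rewrite !inE.
by case/and3P=> -> /subset_trans/(_ WW') -> ->.
Qed.

Definition star_count D U (v : T) (k : nat) : nat :=
  #|[set F in D | [&& F \subset U, #|F| == k & v \in F]]|.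

Lemma sum_star_count D U k : k * face_count D U k = \sum_(v in U) star_count D U v k.
Proof.
have starE v : star_count D U v k =
    \sum_(F in [set F in D | (F \subset U) && (#|F| == k)]) (v \in F).
  rewrite /star_count -sum1_card big_mkcond [RHS]big_mkcond /=.
  apply: eq_bigr => F _; rewrite !inE.
  by case: (F \in D); case: (F \subset U); case: (#|F| == k); case: (v \in F).
under eq_bigr => v _ do rewrite starE.
rewrite exchange_big /= mulnC -sum_nat_const; apply: eq_bigr => F.
rewrite !inE => /and3P[_ FU /eqP <-]; rewrite -sum1_card [RHS]big_mkcond /=.
rewrite big_mkcond /=; apply: eq_bigr => v _.
by case vF: (v \in F); [rewrite (subsetP FU _ vF) | case: (v \in U)].
Qed.

Lemma link_count_le_star D U v k : v \in U ->
  face_count (link D [set v]) (U :\ v) k <= star_count D U v k.+1.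
Proof.
move=> vU; rewrite /face_count; set A := [set t in link D [set v] | _].
have vA t : t \in A -> v \notin t.
  by rewrite !inE => /andP[/andP[dtv _] _]; rewrite (disjointFl dtv) ?inE.
have inj : {in A &, injective (fun t => t :|: [set v])}.
  move=> t1 t2 t1A t2A e; apply/setP=> x; move/setP/(_ x): e; rewrite !inE.
  case: (x =P v) => [->|_]; last by rewrite !orbF.
  by rewrite !orbT (negPf (vA _ t1A)) (negPf (vA _ t2A)).
rewrite -(card_in_imset inj); apply: subset_leq_card.
apply/subsetP=> F /imsetP[t tA ->].
have := tA; rewrite !inE => /andP[/andP[dtv tD] /andP[tU /eqP ct]].
rewrite tD eqxx orbT andbT subUset sub1set vU (subset_trans tU (subsetDl _ _)).
by rewrite card_disjU // cards1 ct addn1 /=.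
Qed.

Lemma face_count_by_links D U k L :
  (forall v, v \in U -> L <= face_count (link D [set v]) (U :\ v) k) ->
  #|U| * L <= k.+1 * face_count D U k.+1.
Proof.
move=> Lv; rewrite sum_star_count -sum_nat_const; apply: leq_sum => v vU.
exact: leq_trans (Lv v vU) (link_count_le_star _ _ vU).
Qed.

End FaceCounts.

Lemma bin_ge_top m k : 0 < k < m -> m <= 'C(m, k).
Proof.
elim: m => [|m IH] /andP[k0 km]; first by [].
case: k k0 km IH => [//|k] _ km IH; rewrite binS.
have [km'|mk] := ltnP k.+1 m.
  by rewrite -addn1 leq_add ?IH ?km' // bin_gt0 ltnW.
rewrite ltnS in km; have -> : m = k.+1 by apply/eqP; rewrite eqn_leq mk km.
by rewrite binn binSn.
Qed.

Section CycleFacts.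
Variables (T : finType) (i d : nat) (D G : {set {set T}}).
Hypothesis H : flag_cycle i D G d.

Lemma vsupp_link_sub (A X : {set T}) : A \subset X ->
  (forall z, z \in X -> z \notin A -> z |: A \notin D) ->
  vsupp (link G A) \subset vsupp G :\: X.
Proof.
move=> AX nfX; apply/subsetP=> z /in_vsupp[t]; rewrite in_link.
move=> /andP[dtA tAG] zt; rewrite inE; apply/andP; split; last first.
  by apply/in_vsupp; exists (t :|: A); rewrite // inE zt.
apply/negP=> zX; have zA : z \notin A by rewrite (disjointFr dtA zt).
move/negP: (nfX z zX zA); apply; apply: (fc_down H (fc_facetD H tAG)).
by apply: setSU; rewrite sub1set.
Qed.

Lemma vsupp_vertex_link (v : T) : vsupp (link G [set v]) \subset vsupp G :\ v.
Proof. by apply: vsupp_link_sub => // z ->. Qed.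

Lemma vertex_link_cycle (d' : nat) (v : T) : d = d'.+1 -> v \in vsupp G ->
  flag_cycle i (link D [set v]) (link G [set v]) d'.
Proof.
move=> dd' /in_vsupp[s sG vs]; apply: (flag_cycle_link H sG).
  by rewrite sub1set.
by rewrite cards1 dd'.
Qed.

(* Every member of G has a neighbour, hence a vertex of the support outside it. *)
Lemma facet_outer_vertex (s1 : {set T}) : s1 \in G ->
  exists2 y, y \in vsupp G & y \notin s1.
Proof.
move=> s1G; have /set0Pn[x xs1] : s1 != set0.
  by rewrite -card_gt0 (fc_facet_card H s1G).
have [s2 [s2G s2ne _]] := fc_ridge H s1G xs1.
have /subsetPn[y ys2 ys1] : ~~ (s2 \subset s1).
  apply: contra s2ne => s21; rewrite eqEcard s21.
  by rewrite (fc_facet_card H s1G) (fc_facet_card H s2G) /=.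
by exists y => //; apply: (subsetP (sub_vsupp s2G)).
Qed.

Lemma card_vsupp_facet : d.+2 <= #|vsupp G|.
Proof.
have [s1 s1G] := fc_nonempty H; have [y yG ys1] := facet_outer_vertex s1G.
have : y |: s1 \subset vsupp G by rewrite subUset sub1set yG sub_vsupp.
by move/subset_leq_card; rewrite cardsU1 ys1 (fc_facet_card H s1G).
Qed.

(* Adding an outer vertex y to a member s1 of G leaves the complex, and a
   small nonface witnesses this: y together with some i vertices of s1. *)
Lemma nonface_across (s1 : {set T}) : s1 \in G -> i <= d.+1 ->
  exists (F : {set T}) (y : T),
    [/\ F \subset s1, #|F| = i, y \in vsupp G, y \notin s1 & y |: F \notin D].
Proof.
move=> s1G id; have [y yG ys1] := facet_outer_vertex s1G.
have ys1D : y |: s1 \notin D.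
  by apply/negP=> /(fc_dim H); rewrite cardsU1 ys1 (fc_facet_card H s1G) ltnn.
have [M [Ms1 MD cM]] := fc_small_nonface H ys1D.
have yM : y \in M.
  apply: contraR MD => yM; apply: (fc_down H (fc_facetD H s1G)).
  apply/subsetP=> z zM; move/subsetP/(_ z zM): Ms1; rewrite !inE.
  by case/orP=> [/eqP zy|//]; rewrite -zy zM in yM.
have My : M :\ y \subset s1.
  apply/subsetP=> z; rewrite !inE => /andP[zy zM].
  by move/subsetP/(_ z zM): Ms1; rewrite !inE (negPf zy).
have [F [MyF Fs1 cF]] :
    exists F : {set T}, [/\ M :\ y \subset F, F \subset s1 & #|F| = i].
  apply: exists_set_between My _; rewrite (fc_facet_card H s1G) id andbT.
  by move: cM; rewrite (cardsD1 y M) yM; lia.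
exists F, y; split=> //; apply: contra MD => yFD; apply: (fc_down H yFD).
by rewrite -(setD1K yM) setUS.
Qed.

Lemma vertices_are_faces (W : {set T}) : vsupp G \subset W ->
  #|vsupp G| <= face_count D W 1.
Proof.
move=> UW; rewrite /face_count -(card_imset _ set1_inj); apply: subset_leq_card.
apply/subsetP=> F /imsetP[u uU ->]; rewrite !inE sub1set (subsetP UW) // cards1.
have [s sG us] := in_vsupp _ _ uU.
by rewrite (fc_down H (fc_facetD H sG)) ?sub1set.
Qed.

End CycleFacts.

Lemma count_via_vertex_links (T : finType) (i d k L : nat) (D G : {set {set T}}) :
  flag_cycle i D G d.+1 ->
  (forall D' G' : {set {set T}},
     flag_cycle i D' G' d -> L <= face_count D' (vsupp G') k) ->
  #|vsupp G| * L <= k.+1 * face_count D (vsupp G) k.+1.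
Proof.
move=> H bound; apply: face_count_by_links => v vU.
apply: leq_trans (bound _ _ (vertex_link_cycle H erefl vU)) _.
exact: face_count_mono (vsupp_vertex_link H v).
Qed.

(* The number of vertices of S(i,d) for d = q i + s with s < i. *)
Definition nverts (i q s : nat) : nat := q * i.+1 + s.+2.

Section VertexBound.
Variables (T : finType) (i : nat).
Hypothesis i_gt0 : 0 < i.

(* A cycle of dimension d = q i + s (s < i) has at least q(i+1) + s + 2
   vertices: the link of a vertex loses one dimension and one vertex; when
   s = 0 the link of i vertices of a small nonface loses i dimensions and
   i + 1 vertices. *)
Lemma vertex_bound (d q s : nat) (D G : {set {set T}}) :
  d = q * i + s -> s < i -> flag_cycle i D G d -> nverts i q s <= #|vsupp G|.
Proof.
elim/ltn_ind: d q s D G => d IH q s D G dE si H; subst d.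
have [s1 s1G] := fc_nonempty H.
case: s si H IH => [|s] si H IH.
  case: q H IH => [|q] H IH.
    by have := card_vsupp_facet H; rewrite /nverts; lia.
  have [|F [y [Fs1 cF yG ys1 yFD]]] := nonface_across H s1G; first lia.
  have HF : flag_cycle i (link D F) (link G F) (q * i + 0).
    by apply: (flag_cycle_link H s1G Fs1); rewrite cF; lia.
  have lt : q * i + 0 < q.+1 * i + 0 by lia.
  have := IH _ lt q 0 _ _ erefl i_gt0 HF.
  have yFU : y |: F \subset vsupp G.
    by rewrite subUset sub1set yG (subset_trans Fs1 (sub_vsupp s1G)).
  have sub : vsupp (link G F) \subset vsupp G :\: (y |: F).
    apply: (vsupp_link_sub H (subsetUr _ _)) => z.
    by rewrite !inE => /orP[/eqP->|->].
  have := card_sub_setD yFU sub; rewrite cardsU1 cF.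
  have -> : y \notin F by apply: contra ys1; apply: (subsetP Fs1).
  by rewrite /nverts; lia.
have /set0Pn[v vs1] : s1 != set0 by rewrite -card_gt0 (fc_facet_card H s1G).
have vU : v \in vsupp G by rewrite (subsetP (sub_vsupp s1G)).
have Hv := vertex_link_cycle H (addnS _ _) vU.
have lt : q * i + s < q * i + s.+1 by lia.
have := IH _ lt q s _ _ erefl (ltnW si) Hv.
have v1U : [set v] \subset vsupp G by rewrite sub1set.
have := card_sub_setD v1U (vsupp_vertex_link H v).
by rewrite cards1 /nverts; lia.
Qed.

End VertexBound.

Section FaceBounds.
Variables (T : finType) (i : nat).
Hypothesis i_gt0 : 0 < i.

(* The face numbers of S(i,d), d = q i + s, as lower bounds: every set of at
   most s+1 vertices is a face, and all but 1 + q[s+1 = i] sets of s+2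
   vertices are faces. *)
Definition face_bounds (q s : nat) (D G : {set {set T}}) : Prop :=
  (forall j, j <= s -> 'C(nverts i q s, j.+1) <= face_count D (vsupp G) j.+1) /\
  'C(nverts i q s, s.+2) - (1 + q * (s.+1 == i)) <= face_count D (vsupp G) s.+2.

Definition bounds_below (d : nat) : Prop :=
  forall q s (D G : {set {set T}}), q * i + s < d -> s < i ->
    flag_cycle i D G (q * i + s) -> face_bounds q s D G.

Section InductionStep.
Variables (q s : nat) (D G : {set {set T}}).
Hypotheses (si : s < i) (H : flag_cycle i D G (q * i + s)).
Hypothesis IH : bounds_below (q * i + s).
Local Notation U := (vsupp G).
Local Notation N := (nverts i q s).

Let U_ge : N <= #|U| := vertex_bound i_gt0 erefl si H.

Lemma low_bounds j : j <= s -> 'C(N, j.+1) <= face_count D U j.+1.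
Proof.
case: j => [_|j js].
  by rewrite bin1 (leq_trans U_ge (vertices_are_faces H (subxx _))).
have [s' Es] : exists s', s = s'.+1 by exists s.-1; lia.
have H' : flag_cycle i D G (q * i + s').+1 by rewrite -addnS -Es.
have lowIH (D' G' : {set {set T}}) : flag_cycle i D' G' (q * i + s') ->
    'C(N.-1, j.+1) <= face_count D' (vsupp G') j.+1.
  move=> H''; have -> : N.-1 = nverts i q s' by rewrite Es /nverts; lia.
  have lt : q * i + s' < q * i + s by lia.
  have si' : s' < i by lia.
  by apply: (IH lt si' H'').1; lia.
have le := count_via_vertex_links H' lowIH.
rewrite -(leq_pmul2l (ltn0Sn j.+1)) -mul_bin_diag; apply: leq_trans le.
by rewrite leq_mul2r U_ge orbT.
Qed.

(* Every cycle one dimension lower has at least C(N-1, s+1) - 1 faces with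
   s+1 vertices: its vertex bound if s = 0, its top bound otherwise. *)
Lemma link_top_bound (D' G' : {set {set T}}) :
  0 < q -> flag_cycle i D' G' (q * i + s).-1 ->
  'C(N.-1, s.+1) - 1 <= face_count D' (vsupp G') s.+1.
Proof.
move=> q_gt0; case: s si IH => [|s'] si' IH' H'.
  have ii : i.-1 < i by lia.
  have dE : (q * i + 0).-1 = q.-1 * i + i.-1 by nia.
  rewrite dE in H'; have := vertex_bound i_gt0 erefl ii H'.
  have := vertices_are_faces H' (subxx _).
  by rewrite bin1 /nverts; lia.
have dE : (q * i + s'.+1).-1 = q * i + s' by lia.
rewrite dE in H'; have lt : q * i + s' < q * i + s'.+1 by lia.
have [_] := IH' q s' D' G' lt (ltnW si') H'.
have -> : (nverts i q s'.+1).-1 = nverts i q s' by rewrite /nverts; lia.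
by rewrite (ltn_eqF si') muln0 addn0.
Qed.

(* Top faces when U has more than N vertices: double counting over vertex
   links, each of which misses at most one (s+1)-subset of its support. *)
Lemma top_bound_loose : 0 < q -> N < #|U| ->
  'C(N, s.+2) - (1 + q * (s.+1 == i)) <= face_count D U s.+2.
Proof.
move=> q_gt0 UN.
have H' : flag_cycle i D G (q * i + s).-1.+1 by rewrite prednK //; nia.
have le := count_via_vertex_links H' (fun D' G' => @link_top_bound D' G' q_gt0).
suff : s.+2 * ('C(N, s.+2) - 1) <= s.+2 * face_count D U s.+2.
  by rewrite leq_pmul2l //; lia.
rewrite mulnBr muln1 -mul_bin_diag; apply: leq_trans le.
have top : N.-1 <= 'C(N.-1, s.+1) by apply: bin_ge_top; rewrite /nverts; nia.
have : N.+1 * ('C(N.-1, s.+1) - 1) <= #|U| * ('C(N.-1, s.+1) - 1).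
  by rewrite leq_mul2r UN orbT.
nia.
Qed.

Section Tight.
Hypotheses (q_gt0 : 0 < q) (tight : #|U| <= N).

Let U_eq : #|U| = N.
Proof. by apply/eqP; rewrite eqn_leq tight U_ge. Qed.

(* In the tight case every set of at most s+1 vertices of U lies in a member
   of G: the links of its large subsets are tight again, so have full support. *)
Lemma tight_sets_in_facets g (B : {set T}) :
  g <= s.+1 -> B \subset U -> #|B| = g -> exists2 t, t \in G & B \subset t.
Proof.
elim: g B => [|g IHg] B gs BU cB.
  have [s1 s1G] := fc_nonempty H; exists s1 => //.
  by move/cards0_eq: cB => ->; apply: sub0set.
have /set0Pn[w wB] : B != set0 by rewrite -card_gt0 cB.
have cBw : #|B :\ w| = g by move: cB; rewrite (cardsD1 w B) wB; lia.
have BwU : B :\ w \subset U := subset_trans (subD1set B w) BU.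
have [t0 t0G Bwt0] := IHg _ (ltnW gs) BwU cBw.
have Hl : flag_cycle i (link D (B :\ w)) (link G (B :\ w)) (q * i + (s - g)).
  by apply: (flag_cycle_link H t0G Bwt0); rewrite cBw; lia.
have sub : vsupp (link G (B :\ w)) \subset U :\: (B :\ w).
  by apply: (vsupp_link_sub H (subxx _)) => z ->.
have sgi : s - g < i by lia.
have full : vsupp (link G (B :\ w)) = U :\: (B :\ w).
  apply/eqP; rewrite eqEcard sub (cardsDS BwU) U_eq cBw.
  by apply: leq_trans (vertex_bound i_gt0 erefl sgi Hl); rewrite /nverts; lia.
have : w \in vsupp (link G (B :\ w)) by rewrite full !inE eqxx (subsetP BU).
case/in_vsupp=> t; rewrite in_link => /andP[_ tG] wt.
exists (t :|: B :\ w) => //; apply/subsetP=> z zB.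
by rewrite !inE; case: (z =P w) => [->|]; rewrite ?wt // zB => _; rewrite orbT.
Qed.

Section MissingFace.
Variables (M1 G0 : {set T}).
Hypotheses (M1U : M1 \subset U) (cM1 : #|M1| = s.+2) (M1D : M1 \notin D).
Hypotheses (G0M1 : G0 \subset M1) (cG0 : #|G0| = s.+1).

(* Outside M1 there remain as many vertices as in the tight case of
   dimension (q-1) i + (i-1). *)
Let card_rest : #|U :\: M1| = nverts i q.-1 i.-1.
Proof. by rewrite (cardsDS M1U) U_eq cM1 /nverts; nia. Qed.

Lemma missing_face_link :
  vsupp (link G G0) = U :\: M1 /\ face_bounds q.-1 i.-1 (link D G0) (link G G0).
Proof.
have [t0 t0G G0t0] := tight_sets_in_facets (leqnn _) (subset_trans G0M1 M1U) cG0.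
have Hl : flag_cycle i (link D G0) (link G G0) (q.-1 * i + i.-1).
  by apply: (flag_cycle_link H t0G G0t0); rewrite cG0; nia.
have lt : q.-1 * i + i.-1 < q * i + s by nia.
have ii : i.-1 < i by lia.
split; last exact: IH lt ii Hl.
apply/eqP; rewrite eqEcard card_rest (vertex_bound i_gt0 erefl ii Hl) andbT.
apply: (vsupp_link_sub H G0M1) => z zM1 zG0.
have -> : z |: G0 = M1.
  apply/eqP; rewrite eqEcard subUset sub1set zM1 G0M1 cardsU1 zG0 cG0 cM1 /=.
  by rewrite add1n.
exact: M1D.
Qed.

Lemma missing_face_link_faces (B : {set T}) :
  B \subset U :\: M1 -> #|B| <= i -> B :|: G0 \in D.
Proof.
move=> BU cB; have [supp_eq [low _]] := missing_face_link.
case cB0: #|B| => [|k].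
  have [t0 t0G G0t0] := tight_sets_in_facets (leqnn _) (subset_trans G0M1 M1U) cG0.
  by move/cards0_eq: cB0 => ->; rewrite set0U (fc_down H (fc_facetD H t0G) G0t0).
have full : 'C(#|U :\: M1|, k.+1) <= face_count (link D G0) (U :\: M1) k.+1.
  by rewrite card_rest -supp_eq; apply: low; lia.
by have := all_subsets_faces full BU cB0; rewrite in_link => /andP[].
Qed.

Lemma missing_face_link_nonfaces : #|nonfaces (link D G0) (U :\: M1) i.+1| <= q.
Proof.
have [supp_eq [_ top]] := missing_face_link.
have := face_count_nonfaces (link D G0) (U :\: M1) i.+1.
move: top; rewrite supp_eq card_rest (prednK i_gt0) eqxx muln1 add1n (prednK q_gt0).
lia.
Qed.

End MissingFace.

(* A second missing (s+2)-face M2 must be disjoint from M1, which forces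
   s+1 = i; it is then a missing face of the link of G0 inside U minus M1. *)
Lemma other_missing_face (M1 M2 G0 : {set T}) : M1 \in nonfaces D U s.+2 ->
  M2 \in nonfaces D U s.+2 -> M2 != M1 -> G0 \subset M1 -> #|G0| = s.+1 ->
  (s.+1 == i) && (M2 \in nonfaces (link D G0) (U :\: M1) i.+1).
Proof.
rewrite !inE => /and3P[M1U /eqP cM1 M1D] /and3P[M2U /eqP cM2 M2D] ne G0M1 cG0.
have cI : #|M1 :&: M2| <= s.+1.
  have : M1 :&: M2 \proper M1.
    rewrite properE subsetIl; apply: contra ne => M1M2.
    rewrite eq_sym eqEcard cM1 cM2 leqnn andbT.
    exact: subset_trans M1M2 (subsetIr _ _).
  by move/proper_card; rewrite cM1.
have [G1 [IG1 G1M1 cG1]] : exists G1 : {set T},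
    [/\ M1 :&: M2 \subset G1, G1 \subset M1 & #|G1| = s.+1].
  by apply: exists_set_between (subsetIl _ _) _; rewrite cI cM1 /=.
have M2U' : M2 :\: G1 \subset U :\: M1.
  apply/subsetP=> z; rewrite !inE => /andP[zG1 zM2]; rewrite (subsetP M2U) // andbT.
  by apply: contra zG1 => zM1; apply: (subsetP IG1); rewrite inE zM1.
have big : i < #|M2 :\: G1|.
  rewrite ltnNge; apply: contra M2D => small.
  apply: (fc_down H (missing_face_link_faces M1U cM1 M1D G1M1 cG1 M2U' small)).
  by apply/subsetP=> z zM2; rewrite !inE zM2 andbT; case: (z \in G1).
have small : #|M2 :\: G1| <= s.+2 by rewrite -cM2 subset_leq_card ?subsetDl.
have si1 : s.+1 = i by apply/eqP; rewrite eqn_leq si -ltnS (leq_trans big small).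
have eB : M2 :\: G1 = M2 by apply/eqP; rewrite eqEcard subsetDl cM2 si1.
rewrite -si1 eqxx cM2 eqxx /= -{1}eB M2U' /= negb_and.
apply/orP; right; apply: contra M2D => M2G0D.
by apply: (fc_down H M2G0D); rewrite subsetUl.
Qed.

Lemma few_missing_top_faces : #|nonfaces D U s.+2| <= 1 + q * (s.+1 == i).
Proof.
have [->|[M1 M1X]] := set_0Vmem (nonfaces D U s.+2); first by rewrite cards0.
have [G0 [_ G0M1 cG0]] : exists G0 : {set T},
    [/\ set0 \subset G0, G0 \subset M1 & #|G0| = s.+1].
  apply: exists_set_between (sub0set _) _; rewrite cards0 /=.
  by move: M1X; rewrite !inE => /and3P[_ /eqP -> _].
have := M1X; rewrite !inE => /and3P[M1U /eqP cM1 M1D].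
rewrite (cardsD1 M1) M1X add1n ltnS.
case: (boolP (s.+1 == i)) => [_|nsi1]; rewrite ?muln1 ?muln0.
  apply: leq_trans (missing_face_link_nonfaces M1U cM1 M1D G0M1 cG0).
  apply: subset_leq_card; apply/subsetP=> M2; rewrite in_setD1 => /andP[ne M2X].
  by case/andP: (other_missing_face M1X M2X ne G0M1 cG0).
rewrite leqn0 cards_eq0; apply/eqP/setP=> M2; rewrite in_setD1 in_set0.
apply/negbTE/negP => /andP[ne M2X].
by have := other_missing_face M1X M2X ne G0M1 cG0; rewrite (negbTE nsi1).
Qed.

Lemma top_bound_tight : 'C(N, s.+2) - (1 + q * (s.+1 == i)) <= face_count D U s.+2.
Proof.
have := face_count_nonfaces D U s.+2; have := few_missing_top_faces.
by rewrite U_eq; lia.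
Qed.

End Tight.
End InductionStep.

Lemma all_bounds d : bounds_below d.
Proof.
elim/ltn_ind: d => d IHd q s D G lt si H.
have IH : bounds_below (q * i + s) := IHd _ lt.
split; first exact: low_bounds.
have [->|q_gt0] := posnP q; first by rewrite /nverts !mul0n add0n binn.
have [UN|tight] := ltnP (nverts i q s) #|vsupp G|.
  exact: top_bound_loose.
exact: top_bound_tight.
Qed.

Theorem face_bounds_hold q s (D G : {set {set T}}) :
  s < i -> flag_cycle i D G (q * i + s) -> face_bounds q s D G.
Proof. exact: all_bounds (ltnSn _). Qed.

End FaceBounds.

Lemma missing_face_below (T : finType) (D : {set {set T}}) (F : {set T}) :
  F \notin D -> exists2 M : {set T}, M \subset F & missing_face D M.
Proof.
have [k cF] : exists k, #|F| < k by exists #|F|.+1.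
elim: k F cF => // k IH F cF FD.
have [/existsP[M /andP[MF MD]]|] :=
  boolP [exists M : {set T}, (M \proper F) && (M \notin D)].
  have [|M' M'M mM'] := IH M _ MD; first by have := proper_card MF; lia.
  by exists M' => //; apply: subset_trans M'M (proper_sub MF).
rewrite negb_exists => /forallP minF; exists F => //; split=> // M MF.
by move: (minF M); rewrite MF /= negbK.
Qed.

Lemma bsign_neq0 (n : nat) (F : {set 'I_n}) (v : 'I_n) : bsign F v != 0%R.
Proof. by rewrite /bsign expf_eq0 oppr_eq0 oner_eq0 andbF. Qed.

Section CycleSupport.
Variables (n d : nat) (D : {set {set 'I_n}}) (c : {set 'I_n} -> int).
Hypothesis c_supp : forall F, c F != 0%R -> (F \in D) && (#|F| == d.+1).
Hypothesis c_cycle : forall R : {set 'I_n}, #|R| = d -> bdry D d c R = 0%R.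

(* In the boundary of a cycle the ridge s \ x of a simplex s of its support
   cannot appear alone: a second simplex of the support contains it. *)
Lemma cycle_ridge (s : {set 'I_n}) (x : 'I_n) : c s != 0%R -> x \in s ->
  exists s', [/\ c s' != 0%R, s' != s & s :\ x \subset s'].
Proof.
move=> cs xs; have /andP[sD /eqP cs1] := c_supp cs.
have [/existsP[s' /and3P[]]|] :=
  boolP [exists s' : {set 'I_n}, [&& c s' != 0%R, s' != s & s :\ x \subset s']].
  by exists s'.
rewrite negb_exists => /forallP alone.
have cR : #|s :\ x| = d by move: cs1; rewrite (cardsD1 x s) xs add1n => -[].
have := c_cycle cR; rewrite /bdry (bigD1 s) /=; last by rewrite sD cs1 eqxx subD1set.
rewrite [X in (_ + X)%R]big1 ?addr0; last first.
  move=> F /andP[/and3P[_ _ sF] Fs]; have cF : c F = 0%R.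
    by apply/eqP; apply: contraR (alone F) => cF; rewrite cF Fs sF.
  by apply: big1 => v _; rewrite cF mulr0.
rewrite setDDr setDv set0U (setIidPr (_ : [set x] \subset s)) ?sub1set // big_set1.
by move/eqP; rewrite mulf_eq0 (negbTE (bsign_neq0 _ _)) (negbTE cs).
Qed.

End CycleSupport.

(* A complex in C(i,d) carries a flag cycle: the support of a nonzero
   top-dimensional homology class. *)
Lemma flag_cycle_of_C (n i d : nat) (D : {set {set 'I_n}}) :
  in_C i d D -> exists G, flag_cycle i D G d.
Proof.
case=> [[_ down] [[_ dim] [[c [c_supp [[F0 cF0] c_cycle]]] no_big]]].
exists [set F | c F != 0%R]; split=> //.
- move=> F FD; have [M MF [MD minM]] := missing_face_below FD.
  by exists M; split=> //; have := no_big M (conj MD minM); lia.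
- by move=> s; rewrite inE => /c_supp/andP[].
- by move=> s; rewrite inE => /c_supp/andP[_ /eqP].
- by exists F0; rewrite inE.
- move=> s x; rewrite inE => cs xs.
  have [s' [cs' ne sub]] := cycle_ridge c_supp c_cycle cs xs.
  by exists s'; rewrite inE.
Qed.

Lemma card_ord_interval (N lo hi : nat) : lo <= hi <= N ->
  #|[set k : 'I_N | lo <= k < hi]| = hi - lo.
Proof.
elim: hi => [|h IH] /andP[lohi hN].
  rewrite leqn0 in lohi; rewrite (eqP lohi); apply/eqP; rewrite cards_eq0.
  by apply/eqP/setP=> k; rewrite !inE ltn0 andbF.
have [loh|] := leqP lo h; last first.
  move=> hlo; have -> : lo = h.+1 by lia.
  rewrite subnn; apply/eqP; rewrite cards_eq0; apply/eqP/setP=> k.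
  by rewrite !inE; lia.
have -> : [set k : 'I_N | lo <= k < h.+1] = Ordinal hN |: [set k : 'I_N | lo <= k < h].
  apply/setP=> k; rewrite !inE ltnS (leq_eqVlt k) -val_eqE /=.
  by case: (k =P h :> nat) => [->|_]; rewrite ?loh.
rewrite cardsU1 inE ltnn andbF IH; last by rewrite loh ltnW.
by rewrite subSn.
Qed.

Section SComplex.
Variables (i d : nat).
Hypothesis i_gt0 : 0 < i.
Local Notation q := (S_q i d).
Local Notation r := (S_r i d).

Lemma card_S_block b : b <= q -> #|S_block i d b| = if b == q then r.+1 else i.+1.
Proof.
move=> bq; have ri : r <= i by rewrite /S_r ltn_pmod.
have -> : S_block i d b = [set k : 'I_(S_N i d) | b * i.+1 <= k < b.+1 * i.+1].
  apply/setP=> k; rewrite !inE eqn_leq -ltnS ltn_divLR // leq_divRL //.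
  by rewrite andbC.
case: eqP => [bE|bq'].
  have -> : [set k : 'I_(S_N i d) | b * i.+1 <= k < b.+1 * i.+1] =
            [set k : 'I_(S_N i d) | b * i.+1 <= k < S_N i d].
    apply/setP=> k; rewrite !inE ltn_ord andbT; apply/andb_idr => _.
    by have := ltn_ord k; rewrite /S_N bE; lia.
  by rewrite card_ord_interval /S_N bE; lia.
by rewrite card_ord_interval /S_N; nia.
Qed.

Lemma S_block_nonface b : b <= q -> S_block i d b \notin S_complex i d.
Proof.
move=> bq; rewrite inE negb_forall; apply/existsP; exists (Ordinal (bq : b < q.+1)).
by rewrite setIid inE properxx.
Qed.

(* S(i,d) misses, among the (r+1)-sets of its vertices, the last block and,
   when r = i, all q+1 blocks. *)
Lemma S_top_faces :
  fnum (S_complex i d) r <= 'C(S_N i d, r.+1) - (1 + q * (r == i)).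
Proof.
set Ix := [set b : 'I_q.+1 | (val b == q) || (r == i)].
set blocks := [set S_block i d (val b) | b in Ix].
have b_le (b : 'I_q.+1) : b <= q by rewrite -ltnS ltn_ord.
have card_block (b : 'I_q.+1) : b \in Ix -> #|S_block i d b| = r.+1.
  by rewrite inE card_S_block ?b_le //; case: eqP => //= _ /eqP->.
have inj : {in Ix &, injective (fun b : 'I_q.+1 => S_block i d (val b))}.
  move=> b1 b2 b1I _ e; have /set0Pn[k kb1] : S_block i d b1 != set0.
    by rewrite -card_gt0 card_block.
  have kb2 : k \in S_block i d b2 by rewrite -e.
  by move: kb1 kb2; rewrite !inE => /eqP b1E /eqP b2E; apply: ord_inj; rewrite -b1E -b2E.
have card_blocks : #|blocks| = 1 + q * (r == i).
  rewrite card_in_imset //; case: (r =P i) => [ri|nri].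
    rewrite muln1 add1n -[RHS](card_ord q.+1).
    by apply: eq_card => b; rewrite !inE ri eqxx orbT.
  rewrite muln0 addn0 -(cards1 (@ord_max q)); apply: eq_card => b.
  by rewrite !inE (introF eqP nri) orbF -val_eqE.
set Z := [set F : {set 'I_(S_N i d)} | #|F| == r.+1].
have blocksZ : blocks \subset Z.
  by apply/subsetP=> F /imsetP[b bI ->]; rewrite inE card_block.
have faces : [set F in S_complex i d | #|F| == r.+1] \subset Z :\: blocks.
  apply/subsetP=> F; rewrite inE => /andP[FS cF].
  rewrite in_setD [F \in Z]inE cF andbT; apply/imsetP=> -[b _ eF].
  by move: FS; rewrite eF; apply/negP; exact: S_block_nonface (b_le b).
rewrite /fnum (leq_trans (subset_leq_card faces)) //.
by rewrite cardsD (setIidPr blocksZ) card_blocks card_draws card_ord.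
Qed.

End SComplex.

Lemma fnum_le_binomial (n j : nat) (X : {set {set 'I_n}}) : fnum X j <= 'C(n, j.+1).
Proof.
rewrite /fnum -[n in 'C(n, _)]card_ord -card_draws; apply: subset_leq_card.
by apply/subsetP=> F; rewrite !inE => /andP[].
Qed.

Lemma face_count_le_fnum (T : finType) (D : {set {set T}}) (W : {set T}) (j : nat) :
  face_count D W j.+1 <= fnum D j.
Proof.
apply: subset_leq_card; apply/subsetP=> F; rewrite !inE.
by case/and3P=> -> _ ->.
Qed.

(* Theorem 1.1: below dimension r, S(i,d) has at most all (j+1)-sets of its
   N vertices as faces, and D has all of them; in dimension r compare the top
   bound with the blocks missing from S(i,d). *)
Theorem theorem1p1 (d i q r : nat) (hi : (0 < i)%N) (hid : (i <= d.+1)%N)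
  (hqr : d.+1 = (q * i + r)%N) (hr1 : (1 <= r)%N) (hri : (r <= i)%N)
  (n : nat) (D : {set {set 'I_n}}) (hD : in_C i d D) :
  forall j : nat, (1 <= j)%N -> (j <= r)%N ->
    (fnum (S_complex i d) j <= fnum D j)%N.
Proof.
move=> j _ jr.
have [G H] := flag_cycle_of_C hD.
have si : r.-1 < i by lia.
have dE : d = q * i + r.-1 by lia.
have Sq : S_q i d = q by rewrite /S_q dE divnMDl // divn_small // addn0.
have Sr : S_r i d = r by rewrite /S_r dE modnMDl modn_small // prednK.
have SN : S_N i d = nverts i q r.-1 by rewrite /S_N Sq Sr /nverts prednK.
rewrite dE in H; have [low top] := face_bounds_hold hi si H.
have [jr'|rj] := ltnP j r.
  apply: leq_trans (fnum_le_binomial _ _) _; rewrite SN.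
  by apply: leq_trans (low j _) (face_count_le_fnum _ _ _); lia.
have -> : j = r by lia.
have := S_top_faces d hi; rewrite Sr Sq => S_top.
apply: leq_trans S_top _; rewrite SN.
apply: leq_trans (face_count_le_fnum D (vsupp G) r).
by move: top; rewrite (prednK hr1).
Qed.
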